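(* Let $\mathbf L=(L,\vee,\wedge,{}',0,1)$ be a member of $\mathcal V$ and $I$ an ideal of $\mathbf L$. Then $\Theta_I:=\{(x,y)\in L^2\mid (x\wedge y)\vee(x\vee y)'\in I\}$ is a congruence on $\mathbf L$ and its kernel $\{x\in L\mid (x,1)\in\Theta_I\}$ equals $I$.
   Context: $\mathcal V$ is the variety of algebras $(L,\vee,\wedge,{}',0,1)$ that are bounded lattices with a complementation $'$ (i.e. $x\vee x'\approx1$, $x\wedge x'\approx0$) satisfying the identities $x\vee y'\approx y'\vee\big((x\vee y')\wedge y\big)$ and $x\wedge y\approx x\wedge\big((x\wedge y)\vee x'\big)$. An ideal term in $y_1,\dots,y_m$ is a term $s(x_1,\dots,x_n,y_1,\dots,y_m)$ such that $\mathcal V$ satisfies $s(x_1,\dots,x_n,1,\dots,1)\approx1$; an ideal of $\mathbf L$ is a subset $I\subseteq L$ such that $s(a_1,\dots,a_n,b_1,\dots,b_m)\in I$ for every ideal term $s$, all $a_i\in L$ and all $b_j\in I$ (in particular $1\in I$). *)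

From mathcomp Require Import all_boot.
Set Implicit Arguments. Unset Strict Implicit. Unset Printing Implicit Defensive.

Record alg := Alg {
  carrier :> Type;
  ajoin : carrier -> carrier -> carrier;
  ameet : carrier -> carrier -> carrier;
  acompl : carrier -> carrier;
  azero : carrier;
  aone : carrier }.

Definition in_V (A : alg) : Prop :=
  let j := @ajoin A in let m := @ameet A in let c := @acompl A in
  let z := @azero A in let o := @aone A in
  (forall x y z', j x (j y z') = j (j x y) z') /\
  (forall x y z', m x (m y z') = m (m x y) z') /\
  (forall x y, j x y = j y x) /\
  (forall x y, m x y = m y x) /\
  (forall x y, j x (m x y) = x) /\
  (forall x y, m x (j x y) = x) /\
  (forall x, j x z = x) /\
  (forall x, m x o = x) /\
  (forall x, j x (c x) = o) /\
  (forall x, m x (c x) = z) /\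
  (forall x y, j x (c y) = j (c y) (m (j x (c y)) y)) /\
  (forall x y, m x y = m x (j (m x y) (c x))).

Inductive term (n k : nat) : Type :=
| TX : 'I_n -> term n k
| TY : 'I_k -> term n k
| TJoin : term n k -> term n k -> term n k
| TMeet : term n k -> term n k -> term n k
| TCompl : term n k -> term n k
| TZero : term n k
| TOne : term n k.

Fixpoint eval n k (A : alg) (a : 'I_n -> A) (b : 'I_k -> A) (t : term n k) : A :=
  match t with
  | TX i => a i
  | TY j => b j
  | TJoin s u => @ajoin A (eval a b s) (eval a b u)
  | TMeet s u => @ameet A (eval a b s) (eval a b u)
  | TCompl s => @acompl A (eval a b s)
  | TZero => @azero A
  | TOne => @aone A
  end.

Definition ideal_term n k (s : term n k) : Prop :=
  forall B : alg, in_V B -> forall a : 'I_n -> B,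
    eval a (fun _ => @aone B) s = @aone B.

Definition ideal (A : alg) (I : A -> Prop) : Prop :=
  forall n k (s : term n k), ideal_term s ->
  forall (a : 'I_n -> A) (b : 'I_k -> A), (forall j, I (b j)) -> I (eval a b s).

Definition congruence (A : alg) (R : A -> A -> Prop) : Prop :=
  (forall x, R x x) /\ (forall x y, R x y -> R y x) /\
  (forall x y z, R x y -> R y z -> R x z) /\
  (forall x y x' y', R x x' -> R y y' -> R (@ajoin A x y) (@ajoin A x' y')) /\
  (forall x y x' y', R x x' -> R y y' -> R (@ameet A x y) (@ameet A x' y')) /\
  (forall x x', R x x' -> R (@acompl A x) (@acompl A x')).

Definition Theta (A : alg) (I : A -> Prop) (x y : A) : Prop :=
  I (@ajoin A (@ameet A x y) (@acompl A (@ajoin A x y))).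

From mathcomp Require Import all_boot.
Set Implicit Arguments. Unset Strict Implicit. Unset Printing Implicit Defensive.

(* Call x and y indiscernible by I when p(x) and p(y) lie in I or not together,
   for every unary polynomial p of L.  This relation is a congruence by
   construction, so it suffices to show that it coincides with Theta_I.
   Write eqv x y := (x /\ y) \/ (x \/ y)'.  In V we have eqv x x = 1,
   eqv x 1 = x and eqv x y /\ (x \/ y) = x /\ y.  The first two identities
   make eqv (p y_0) (eqv (p 1) y_1) an ideal term for every polynomial p, which
   yields that every u in I is indiscernible from 1.  Conversely, if eqv x y is in I,
   it is indiscernible from 1, so meeting with x \/ y makes x /\ y and x \/ y
   indiscernible, and meeting further with x and with y gives x ~ x /\ y ~ y.
   Finally eqv x 1 = x identifies the kernel with I. *)

Fixpoint tsubst n k m k' (fx : 'I_n -> term m k') (fy : 'I_k -> term m k')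
  (t : term n k) : term m k' :=
  match t with
  | TX i => fx i
  | TY j => fy j
  | TJoin s u => TJoin (tsubst fx fy s) (tsubst fx fy u)
  | TMeet s u => TMeet (tsubst fx fy s) (tsubst fx fy u)
  | TCompl s => TCompl (tsubst fx fy s)
  | TZero => TZero m k'
  | TOne => TOne m k'
  end.

Lemma eval_ext n k (A : alg) (a a' : 'I_n -> A) (b b' : 'I_k -> A) (t : term n k) :
  a =1 a' -> b =1 b' -> eval a b t = eval a' b' t.
Proof. by move=> Ea Eb; elim: t => //= [s -> u ->|s -> u ->|s ->]. Qed.

Lemma eval_tsubst n k m k' (A : alg) (a : 'I_m -> A) (b : 'I_k' -> A)
    (fx : 'I_n -> term m k') (fy : 'I_k -> term m k') (t : term n k) :
  eval a b (tsubst fx fy t) =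
  eval (fun i => eval a b (fx i)) (fun j => eval a b (fy j)) t.
Proof. by elim: t => //= [s -> u ->|s -> u ->|s ->]. Qed.

Definition upoly n (A : alg) (s : term n 1) (a : 'I_n -> A) (u : A) : A :=
  eval a (fun=> u) s.

Definition tcomp n m (s : term n 1) (q : term m 1) : term (n + m) 1 :=
  tsubst (fun i => TX 1 (lshift m i))
         (fun=> tsubst (fun j => TX 1 (rshift n j)) (@TY (n + m) 1) q) s.

Definition cat_params n m (A : alg) (a : 'I_n -> A) (c : 'I_m -> A) :
    'I_(n + m) -> A :=
  fun i => match split i with inl i => a i | inr j => c j end.

Lemma upoly_comp n m (A : alg) (s : term n 1) (q : term m 1)
    (a : 'I_n -> A) (c : 'I_m -> A) (u : A) :
  upoly (tcomp s q) (cat_params a c) u = upoly s a (upoly q c u).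
Proof.
rewrite /upoly eval_tsubst; apply: eval_ext => [i|j] /=.
  by rewrite /cat_params (unsplitK (inl i)).
rewrite eval_tsubst; apply: eval_ext => // i /=.
by rewrite /cat_params (unsplitK (inr i)).
Qed.

Section VarietyLaws.

Variable A : alg.
Hypothesis HA : in_V A.

Local Notation "x \v y" := (ajoin x y) (at level 50, left associativity).
Local Notation "x \m y" := (ameet x y) (at level 40, left associativity).
Local Notation "x ^'" := (acompl x).
Local Notation "0" := (azero A).
Local Notation "1" := (aone A).

Lemma meetA (x y z : A) : x \m (y \m z) = x \m y \m z.
Proof. by case: HA => _ []. Qed.

Lemma joinC (x y : A) : x \v y = y \v x.
Proof. by case: HA => _ [_ []]. Qed.

Lemma meetC (x y : A) : x \m y = y \m x.
Proof. by case: HA => _ [_ [_ []]]. Qed.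

Lemma joinKI (x y : A) : x \v (x \m y) = x.
Proof. by case: HA => _ [_ [_ [_ []]]]. Qed.

Lemma meetKU (x y : A) : x \m (x \v y) = x.
Proof. by case: HA => _ [_ [_ [_ [_ []]]]]. Qed.

Lemma join0 (x : A) : x \v 0 = x.
Proof. by case: HA => _ [_ [_ [_ [_ [_ []]]]]]. Qed.

Lemma meet1 (x : A) : x \m 1 = x.
Proof. by case: HA => _ [_ [_ [_ [_ [_ [_ []]]]]]]. Qed.

Lemma joinxC (x : A) : x \v x^' = 1.
Proof. by case: HA => _ [_ [_ [_ [_ [_ [_ [_ []]]]]]]]. Qed.

Lemma meetxC (x : A) : x \m x^' = 0.
Proof. by case: HA => _ [_ [_ [_ [_ [_ [_ [_ [_ []]]]]]]]]. Qed.

Lemma meet_joinC_id (x y : A) : x \m y = x \m (x \m y \v x^').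
Proof. by case: HA => _ [_ [_ [_ [_ [_ [_ [_ [_ [_ [_ ]]]]]]]]]]. Qed.

Lemma meetxx (x : A) : x \m x = x.
Proof. by have := meetKU x (x \m x); rewrite joinKI. Qed.

Lemma joinxx (x : A) : x \v x = x.
Proof. by have := joinKI x (x \v x); rewrite meetKU. Qed.

Lemma join1 (x : A) : x \v 1 = 1.
Proof. by rewrite -{1}(meet1 x) joinC meetC joinKI. Qed.

Lemma compl1 : 1^' = 0.
Proof. by rewrite -(meetxC 1) meetC meet1. Qed.

Definition eqv (x y : A) : A := x \m y \v (x \v y)^'.

Lemma eqvxx (x : A) : eqv x x = 1.
Proof. by rewrite /eqv meetxx joinxx joinxC. Qed.

Lemma eqvx1 (x : A) : eqv x 1 = x.
Proof. by rewrite /eqv join1 compl1 meet1 join0. Qed.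

Lemma eqv_meet_join (x y : A) : eqv x y \m (x \v y) = x \m y.
Proof.
have Exy : (x \v y) \m (x \m y) = x \m y.
  by rewrite meetC -meetA (joinC x) (meetKU y).
by rewrite meetC /eqv -{1}Exy -meet_joinC_id.
Qed.

End VarietyLaws.

Lemma congruence_eqrel (A : alg) (R S : A -> A -> Prop) :
  (forall x y, R x y <-> S x y) -> congruence R -> congruence S.
Proof.
move=> RS [Rrefl [Rsym [Rtrans [Rjoin [Rmeet Rcompl]]]]].
split; first by move=> x; apply/RS.
split; first by move=> x y /RS/Rsym/RS.
split; first by move=> x y z /RS Rxy /RS Ryz; apply/RS; apply: Rtrans Ryz.
split; first by move=> x y x' y' /RS Rx /RS Ry; apply/RS; apply: Rjoin.
split; first by move=> x y x' y' /RS Rx /RS Ry; apply/RS; apply: Rmeet.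
by move=> x x' /RS Rx; apply/RS; apply: Rcompl.
Qed.

Section Indiscernibility.

Variables (L : alg) (I : L -> Prop).

Definition indisc (x y : L) : Prop :=
  forall n (s : term n 1) (a : 'I_n -> L), I (upoly s a x) <-> I (upoly s a y).

Lemma indisc_upoly m (q : term m 1) (c : 'I_m -> L) (x y : L) :
  indisc x y -> indisc (upoly q c x) (upoly q c y).
Proof. by move=> Hxy n s a; rewrite -!upoly_comp; apply: Hxy. Qed.

Lemma indisc_trans (x y z : L) : indisc x y -> indisc y z -> indisc x z.
Proof. by move=> Hxy Hyz n s a; apply: iff_trans (Hxy n s a) (Hyz n s a). Qed.

Lemma indisc_sym (x y : L) : indisc x y -> indisc y x.
Proof. by move=> Hxy n s a; apply: iff_sym. Qed.

Lemma indisc_meetr (c x y : L) : indisc x y -> indisc (ameet x c) (ameet y c).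
Proof. exact: (@indisc_upoly 1 (TMeet (TY 1 ord0) (TX 1 ord0)) (fun=> c)). Qed.

Lemma indisc_congruence : congruence indisc.
Proof.
split; first by [].
split; first exact: indisc_sym.
split; first exact: indisc_trans.
split.
  move=> x y x' y' Hx Hy; apply: (@indisc_trans _ (ajoin x' y)).
    exact: (@indisc_upoly 1 (TJoin (TY 1 ord0) (TX 1 ord0)) (fun=> y)).
  exact: (@indisc_upoly 1 (TJoin (TX 1 ord0) (TY 1 ord0)) (fun=> x')).
split.
  move=> x y x' y' Hx Hy; apply: (@indisc_trans _ (ameet x' y)).
    exact: indisc_meetr.
  exact: (@indisc_upoly 1 (TMeet (TX 1 ord0) (TY 1 ord0)) (fun=> x')).
move=> x x'; exact: (@indisc_upoly 0 (TCompl (TY 0 ord0)) (fun=> x)).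
Qed.

Hypotheses (HL : in_V L) (HI : ideal I).

Lemma ideal1 : I (aone L).
Proof.
have := @HI 0 0 (TOne 0 0) (fun _ _ _ => erefl) (fun=> aone L) (fun=> aone L).
by apply; case.
Qed.

Definition teqv n k (s u : term n k) : term n k :=
  TJoin (TMeet s u) (TCompl (TJoin s u)).

Lemma eval_teqv n k (A : alg) (a : 'I_n -> A) (b : 'I_k -> A) (s u : term n k) :
  eval a b (teqv s u) = eqv (eval a b s) (eval a b u).
Proof. by []. Qed.

Definition with_y0 n (s : term n 1) : term n 2 :=
  tsubst (@TX n 2) (fun=> TY n ord0) s.

Lemma eval_with_y0 n (A : alg) (a : 'I_n -> A) (b : 'I_2 -> A) (s : term n 1) :
  eval a b (with_y0 s) = upoly s a (b ord0).
Proof. by rewrite eval_tsubst; apply: eval_ext. Qed.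

(* [eqv p (eqv q y_1)] is an ideal term; substituting [y_1 := q(u)] gives [p(u)]. *)
Lemma ideal_transfer n (p q : term n 1) :
    (forall B : alg, in_V B -> forall a : 'I_n -> B,
       upoly p a (aone B) = upoly q a (aone B)) ->
  forall (a : 'I_n -> L) (u : L), I u -> I (upoly q a u) -> I (upoly p a u).
Proof.
move=> Epq a u Iu Iqu.
set t := teqv (with_y0 p) (teqv (with_y0 q) (TY n ord_max)).
have t_ideal : ideal_term t.
  by move=> B HB c; rewrite !eval_teqv !eval_with_y0 /= eqvx1 // Epq // eqvxx.
pose b (j : 'I_2) := if j == ord0 then u else upoly q a u.
have Ib j : I (b j) by rewrite /b; case: ifP.
have := HI t_ideal a Ib.
by rewrite !eval_teqv !eval_with_y0 /b /= eqvxx // eqvx1.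
Qed.

Lemma indisc_ideal1 (u : L) : I u -> indisc u (aone L).
Proof.
move=> Iu n s a.
pose s1 := tsubst (@TX n 1) (fun=> TOne n 1) s.
have Es1 (A : alg) (c : 'I_n -> A) (v : A) : upoly s1 c v = upoly s c (aone A).
  by rewrite /upoly eval_tsubst; apply: eval_ext.
split=> H.
- by rewrite -(Es1 _ _ u); apply: ideal_transfer H => // B _ c; rewrite Es1.
- by apply: (ideal_transfer (q := s1)) => //; rewrite Es1.
Qed.

Lemma Theta_indisc (x y : L) : Theta I x y <-> indisc x y.
Proof.
split=> [Ixy|Hxy]; last first.
  have := Hxy 1 (teqv (TX 1 ord0) (TY 1 ord0)) (fun=> x).
  by rewrite /upoly /= -/(eqv x x) (eqvxx HL) => /iffLR; apply; apply: ideal1.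
have /(indisc_meetr (ajoin x y)) := indisc_ideal1 Ixy.
rewrite -/(eqv x y) (eqv_meet_join HL) (meetC HL (aone L)) (meet1 HL) => Hmj.
have Hx := indisc_meetr x Hmj; have Hy := indisc_meetr y Hmj.
rewrite -(meetA HL) (meetC HL y) (meetA HL) (meetxx HL) in Hx.
rewrite (meetC HL _ x) (meetKU HL x) in Hx.
rewrite -(meetA HL) (meetxx HL) (meetC HL (ajoin x y)) (joinC HL x) (meetKU HL y) in Hy.
exact: indisc_trans (indisc_sym Hx) Hy.
Qed.

End Indiscernibility.

Theorem mainTheorem9 (L : alg) (HL : in_V L) (I : L -> Prop) (HI : ideal I) :
  congruence (Theta I) /\ (forall x : L, Theta I x (@aone L) <-> I x).
Proof.
split.
  apply: congruence_eqrel (indisc_congruence I) => x y.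
  by apply: iff_sym; apply: Theta_indisc.
by move=> x; rewrite /Theta -/(eqv x (aone L)) eqvx1.
Qed.
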